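(* Let $m,n\ge 3$ and let $e$ be any hyperedge of $\mathcal{C}^3_{m,n}$. Then $\mathcal{C}^3_{m,n}-e$ has exactly one negative Seidel eigenvalue, and all its remaining Seidel eigenvalues are positive.
   Context: For a hypergraph $\mathcal{H}$ and distinct vertices $i,j$, the co-degree $c_{ij}$ is the number of hyperedges containing both $i$ and $j$. The Seidel matrix $\mathcal{S}(\mathcal{H})$ has zero diagonal and $(i,j)$-entry $1-2c_{ij}$ for $i\neq j$; its eigenvalues (with multiplicity) are the Seidel eigenvalues of $\mathcal{H}$. The complete $3$-uniform bipartite hypergraph $\mathcal{C}^3_{m,n}=(V_1,V_2,E)$ has vertex set $V_1\sqcup V_2$, $|V_1|=m$, $|V_2|=n$, and $E$ = all $3$-subsets meeting both $V_1$ and $V_2$. For a hyperedge $e$, $\mathcal{H}-e$ denotes the hypergraph with the same vertex set and hyperedge set $E\setminus\{e\}$. *)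

From HB Require Import structures.
From mathcomp Require Import all_boot all_order all_algebra.
Set Implicit Arguments. Unset Strict Implicit. Unset Printing Implicit Defensive.
Import Order.TTheory GRing.Theory Num.Theory.

(* Vertex set V1 ⊔ V2 is 'I_(m+n); V1 = {i | i < m}, V2 = {i | m <= i}. *)
Definition in_V1 (m n : nat) (i : 'I_(m + n)) : bool := (i < m)%N.

Definition C3 (m n : nat) : {set {set 'I_(m + n)}} :=
  [set f : {set 'I_(m + n)} | [&& #|f| == 3%N,
      [exists x in f, in_V1 x] & [exists x in f, ~~ in_V1 x]]].

Definition codeg (N : nat) (E : {set {set 'I_N}}) (i j : 'I_N) : nat :=
  #|[set f in E | (i \in f) && (j \in f)]|.

Definition seidel (R : nzRingType) (N : nat) (E : {set {set 'I_N}}) : 'M[R]_N :=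
  \matrix_(i, j) (if i == j then 0 else 1 - 2 * (codeg E i j)%:R)%R.

(* Let f, g, u be the indicator vectors of V1, V2 and e.  Counting the third
   vertex of a hyperedge through i and j gives the co-degrees (n inside V1, m
   inside V2, m + n - 2 across), so the Seidel matrix of C^3_{m,n} - e is
     S = a ff^T + b gg^T + c (fg^T + gf^T) + 2 uu^T + diag(d),
   a = 1 - 2n, b = 1 - 2m, c = 5 - 2(m + n), with d > 0 when m, n >= 3.
   As a < 0 and ab <= c^2, the binary form in (v.f, v.g) is nonnegative on the
   hyperplane a v.f + c v.g = 0, where S is therefore positive definite.  A
   hyperplane meets every plane, so S has at most one nonpositive eigenvalue;
   since tr S = 0, that eigenvalue exists and is negative.  The spectral
   theorem is applied to S over R[i]. *)

From mathcomp Require Import all_boot all_order all_algebra.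
From mathcomp Require Import zify ring complex.
Import Order.TTheory GRing.Theory Num.Theory.
Set Implicit Arguments. Unset Strict Implicit.
Local Open Scope ring_scope.
Local Open Scope sesquilinear_scope.

Lemma codeg_setD1 N (E : {set {set 'I_N}}) (e : {set 'I_N}) i j : e \in E ->
  (codeg (E :\ e) i j + ((i \in e) && (j \in e)) = codeg E i j)%N.
Proof.
move=> eE; rewrite /codeg [in RHS](cardsD1 e) addnC inE eE.
congr (_ + _); apply: eq_card => f; rewrite !inE.
by case: (f == e).
Qed.

Lemma card3_through (T : finType) (f : {set T}) i j : i != j -> #|f| = 3 ->
  i \in f -> j \in f -> exists2 k, k \notin [set i; j] & f = [set i; j; k].
Proof.
move=> ij f3 fi fj.
have sub : [set i; j] \subset f.
  by apply/subsetP => z; rewrite !inE => /orP[]/eqP->.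
have /cards1P[k Ek] : #|f :\: [set i; j]| == 1 by rewrite cardsDS // cards2 ij f3.
have : k \in f :\: [set i; j] by rewrite Ek set11.
rewrite inE => /andP[kij kf]; exists k => //.
by rewrite -(setID f [set i; j]) (setIidPr sub) Ek.
Qed.

Lemma exists_in_set3 (T : finType) (P : pred T) i j k :
  [exists x in [set i; j; k], P x] = [|| P i, P j | P k].
Proof.
apply/existsP/idP => [[x /andP[]]|].
  by rewrite !inE => /orP[/orP[]|]/eqP-> ->; rewrite ?orbT.
by case/or3P => h; [exists i | exists j | exists k]; rewrite !inE eqxx ?orbT.
Qed.

Section CompleteBipartite.
Variables m n : nat.
Implicit Types i j k : 'I_(m + n).

Lemma card_V1 : #|[set k : 'I_(m + n) | in_V1 k]| = m.
Proof.
have -> : [set k : 'I_(m + n) | in_V1 k] = [set lshift n k | k : 'I_m].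
  apply/setP => k; rewrite !inE /in_V1; apply/idP/imsetP.
    by move=> hk; exists (Ordinal hk) => //; apply/val_inj.
  by case=> x _ ->; rewrite /= ltn_ord.
by rewrite card_imset ?card_ord //; apply: lshift_inj.
Qed.

Lemma card_V2 : #|[set k : 'I_(m + n) | ~~ in_V1 k]| = n.
Proof.
have := cardsC [set k : 'I_(m + n) | in_V1 k].
rewrite card_V1 card_ord.
have -> : ~: [set k : 'I_(m + n) | in_V1 k] = [set k | ~~ in_V1 k].
  by apply/setP => k; rewrite !inE.
by move/eqP; rewrite eqn_add2l => /eqP.
Qed.

Definition third_vertices i j : {set 'I_(m + n)} :=
  [set k | [&& k != i, k != j, [|| in_V1 i, in_V1 j | in_V1 k]
                             & [|| ~~ in_V1 i, ~~ in_V1 j | ~~ in_V1 k]]].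

Lemma card_third_vertices i j : i != j ->
  #|third_vertices i j| =
    if in_V1 i == in_V1 j then (if in_V1 i then n else m) else (m + n - 2)%N.
Proof.
move=> ij; have cardC2 : #|~: [set i; j]| = (m + n - 2)%N.
  by have := cardsC [set i; j]; rewrite cards2 ij card_ord; lia.
rewrite /third_vertices.
case Hi: (in_V1 i); case Hj: (in_V1 j) => /=.
- apply: eq_trans card_V2; apply: eq_card => k; rewrite !inE.
  case Hk: (in_V1 k); rewrite ?andbF ?andbT //=.
  by apply/andP; split; apply/negP => /eqP E; subst k; rewrite ?Hi ?Hj in Hk.
- by rewrite -cardC2; apply: eq_card => k; rewrite !inE !andbT negb_or.
- by rewrite -cardC2; apply: eq_card => k; rewrite !inE !andbT negb_or ?orbT.
- apply: eq_trans card_V1; apply: eq_card => k; rewrite !inE.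
  case Hk: (in_V1 k); rewrite ?andbF ?andbT //=.
  by apply/andP; split; apply/negP => /eqP E; subst k; rewrite ?Hi ?Hj in Hk.
Qed.

Lemma codeg_C3 i j : i != j ->
  codeg (C3 m n) i j =
    if in_V1 i == in_V1 j then (if in_V1 i then n else m) else (m + n - 2)%N.
Proof.
move=> ij; rewrite -card_third_vertices //.
have set3_C3 k : k \notin [set i; j] ->
    ([set i; j; k] \in C3 m n) = (k \in third_vertices i j).
  move=> kij; rewrite !inE !exists_in_set3.
  have -> : #|[set i; j; k]| = 3%N by rewrite setUC cardsU1 cards2 kij ij.
  by move: kij; rewrite !inE negb_or => /andP[-> ->].
have third_ij k : k \in third_vertices i j -> k \notin [set i; j].
  by rewrite !inE negb_or => /and3P[-> -> _].
have inj : {in third_vertices i j &, injective (fun k => [set i; j; k])}.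
  move=> k k' /third_ij kij /third_ij k'ij E.
  have : k \in [set i; j; k'] by rewrite -E !inE eqxx orbT.
  by rewrite in_setU (negbTE kij) /= => /set1P.
rewrite /codeg -(card_in_imset inj); apply: eq_card => f; rewrite inE.
apply/andP/imsetP => [[fC /andP[fi fj]] | [k kij ->]].
  have f3 : #|f| = 3%N by move: fC; rewrite inE => /and3P[/eqP].
  have [k kij Ef] := card3_through ij f3 fi fj.
  by rewrite Ef set3_C3 // in fC; exists k.
by split; rewrite ?set3_C3 ?third_ij // !inE !eqxx ?orbT.
Qed.
End CompleteBipartite.

Lemma map_seidel (R S : nzRingType) (f : {rmorphism R -> S}) N
    (E : {set {set 'I_N}}) :
  map_mx f (seidel R E) = seidel S E.
Proof.
apply/matrixP => i j; rewrite !mxE.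
by case: eqP; rewrite ?rmorph0 // rmorphB rmorphM rmorph1 !rmorph_nat.
Qed.

Lemma tr_seidel (R : nzRingType) N (E : {set {set 'I_N}}) :
  (seidel R E)^T = seidel R E.
Proof.
apply/matrixP => i j; rewrite !mxE eq_sym /codeg.
suff -> : [set f in E | j \in f & i \in f] = [set f in E | i \in f & j \in f].
  by [].
by apply/setP => f; rewrite !inE [(j \in f) && _]andbC.
Qed.

Lemma mxtrace_seidel (R : nzRingType) N (E : {set {set 'I_N}}) :
  \tr (seidel R E) = 0.
Proof. by apply: big1 => i _; rewrite mxE eqxx. Qed.

Lemma seidel_hermsym (C : numClosedFieldType) N (E : {set {set 'I_N}}) :
  seidel C E \is hermsymmx.
Proof.
apply: realsym_hermsym.
  by apply/is_hermitianmxP; rewrite expr0 scale1r map_mx_id // tr_seidel.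
apply/mxOverP => i j; rewrite mxE.
by case: eqP => _; rewrite ?real0 // rpredB ?rpredM ?real1 ?realn.
Qed.


Lemma binary_hform_ge0 (C : numClosedFieldType) (a b c s t : C) :
  a \is Num.real -> c \is Num.real -> a < 0 -> a * b <= c ^+ 2 ->
  a * s + c * t = 0 ->
  0 <= a * (s * s^*) + b * (t * t^*) + c * (s * t^* + t * s^*).
Proof.
move=> /conj_Creal ca /conj_Creal cc a_lt0 abc ast.
have as_ct : a * s = - (c * t) by apply/eqP; rewrite -subr_eq0 opprK ast.
(* Multiplied by a < 0 and with a s = - c t, the form is (a b - c^2) |t|^2. *)
rewrite -(nmulr_rle0 _ a_lt0).
have -> : a * (a * (s * s^*) + b * (t * t^*) + c * (s * t^* + t * s^*))
    = (a * s) * (a * s)^* + a * b * (t * t^*)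
      + c * ((a * s) * t^* + t * (a * s)^*).
  by rewrite rmorphM /= ca; ring.
rewrite as_ct rmorphN rmorphM /= cc.
have -> : - (c * t) * - (c * t^*) + a * b * (t * t^*) +
    c * (- (c * t) * t^* + t * - (c * t^*)) = (a * b - c ^+ 2) * (t * t^*).
  by ring.
by rewrite mulr_le0_ge0 ?mul_conjC_ge0 // subr_le0.
Qed.

Section HermitianForm.
Variables (C : numClosedFieldType) (N : nat).
Implicit Types (v p q : 'rV[C]_N) (M : 'M[C]_N).

Definition qform M v := (v *m M *m v ^t*) 0 0.

Lemma qformD M1 M2 v : qform (M1 + M2) v = qform M1 v + qform M2 v.
Proof. by rewrite /qform mulmxDr mulmxDl mxE. Qed.

Lemma qformZ a M v : qform (a *: M) v = a * qform M v.
Proof. by rewrite /qform -scalemxAr -scalemxAl mxE. Qed.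

Lemma qform_mul_realmx p q v : q \is a realmx ->
  qform (p^T *m q) v = (v *m p^T) 0 0 * ((v *m q^T) 0 0)^*.
Proof.
move=> /mxOverP qr; rewrite /qform !mulmxA -(mulmxA (v *m p^T)) mxE big_ord1.
congr (_ * _); rewrite !mxE rmorph_sum; apply: eq_bigr => k _.
by rewrite !mxE rmorphM /= (conj_Creal (qr 0 k)) mulrC.
Qed.

Lemma qform_diag (D : 'rV[C]_N) v :
  qform (diag_mx D) v = \sum_k D 0 k * (v 0 k * (v 0 k)^*).
Proof.
rewrite /qform mxE; apply: eq_bigr => k _; rewrite mul_mx_diag !mxE.
by rewrite mulrAC mulrC.
Qed.

Lemma qform_diag_gt0 (D : 'rV[C]_N) v : (forall k, 0 < D 0 k) -> v != 0 ->
  0 < qform (diag_mx D) v.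
Proof.
move=> Dpos vn0; rewrite qform_diag.
have [k0 vk0] : exists k0, v 0 k0 != 0.
  apply/existsP; apply: contraR vn0; rewrite negb_exists => /forallP v0.
  by apply/eqP/rowP => k; move: (v0 k); rewrite mxE negbK => /eqP.
rewrite (bigD1 k0) //= ltr_pwDl //.
  by rewrite mulr_gt0 // mul_conjC_gt0.
by apply: sumr_ge0 => k _; rewrite mulr_ge0 ?mul_conjC_ge0 // ltW.
Qed.

Lemma qform_unitary P M v : P \is unitarymx ->
  qform (P^t* *m M *m P) (v *m P) = qform M v.
Proof.
move=> /unitarymxP PPt; rewrite /qform trmx_mul map_mxM !mulmxA.
by rewrite -(mulmxA v) PPt mulmx1 -(mulmxA _ P) PPt mulmx1.
Qed.

Lemma qform_gt0_on_hyperplane (a b c w : C) (F G U D : 'rV[C]_N) v :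
  a \is Num.real -> c \is Num.real -> F \is a realmx -> G \is a realmx ->
  U \is a realmx -> a < 0 -> a * b <= c ^+ 2 -> 0 <= w ->
  (forall k, 0 < D 0 k) -> v != 0 -> (v *m (a *: F + c *: G)^T) 0 0 = 0 ->
  0 < qform (a *: (F^T *m F) + b *: (G^T *m G) + c *: (F^T *m G + G^T *m F)
             + w *: (U^T *m U) + diag_mx D) v.
Proof.
move=> ar cr Fr Gr Ur a_lt0 abc w_ge0 Dpos vn0 vFG.
rewrite !qformD !qformZ qformD !qform_mul_realmx //.
set s := (v *m F^T) 0 0; set t := (v *m G^T) 0 0.
have ast : a * s + c * t = 0.
  by rewrite /s /t -vFG linearD /= !linearZ /= mulmxDr -!scalemxAr !mxE.
apply: ltr_wpDl; last exact: qform_diag_gt0.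
apply: addr_ge0; first exact: binary_hform_ge0.
by rewrite mulr_ge0 ?mul_conjC_ge0.
Qed.

End HermitianForm.

Lemma exists_supp2_orthogonal (R : comNzRingType) N (w : 'rV[R]_N) (i j : 'I_N) :
  i != j -> exists y : 'rV[R]_N,
    [/\ y != 0, (y *m w^T) 0 0 = 0 & forall k, k != i -> k != j -> y 0 k = 0].
Proof.
move=> ij; have [wi0|wi_neq0] := eqVneq (w 0 i) 0.
  exists (delta_mx 0 i); split; last 2 first.
  - by rewrite -rowE !mxE.
  - by move=> k /negbTE ki _; rewrite mxE ki andbF.
  by apply/negP => /eqP/rowP/(_ i)/eqP; rewrite !mxE !eqxx mulr1n oner_eq0.
exists (w 0 j *: delta_mx 0 i - w 0 i *: delta_mx 0 j); split.
- apply: contra_neq wi_neq0 => /rowP/(_ j)/eqP.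
  rewrite !mxE [j == i]eq_sym (negbTE ij) !eqxx mulr0 mulr1 sub0r oppr_eq0.
  by move/eqP.
- by rewrite mulmxBl -!scalemxAl -!rowE !mxE mulrC subrr.
- by move=> k /negbTE ki /negbTE kj; rewrite !mxE ki kj !andbF !mulr0 subrr.
Qed.

Section SpectralSigns.
Variables (C : numClosedFieldType) (N : nat) (A : 'M[C]_N) (w : 'rV[C]_N).
Hypothesis A_herm : A \is hermsymmx.
Hypothesis A_pos_on_hyperplane :
  forall v, v != 0 -> (v *m w^T) 0 0 = 0 -> 0 < qform A v.

Let P := spectralmx A.
Let D := spectral_diag A.

Lemma spectral_decomposition : A = P^t* *m diag_mx D *m P.
Proof.
rewrite -invmx_unitary ?spectral_unitarymx //.
exact/orthomx_spectralP/hermitian_normalmx.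
Qed.

Lemma spectral_diag_real i : D 0 i \is Num.real.
Proof. by have /mxOverP := hermitian_spectral_diag_real A_herm; apply. Qed.

Lemma mxtrace_spectral : \tr A = \sum_i D 0 i.
Proof.
rewrite {1}spectral_decomposition -mulmxA mxtrace_mulC -mulmxA.
by have /unitarymxP -> := spectral_unitarymx A; rewrite mulmx1 mxtrace_diag.
Qed.

Lemma spectral_diag_le0_pair i j : i != j -> D 0 i <= 0 -> D 0 j <= 0 -> False.
Proof.
move=> ij Di Dj.
(* In spectral coordinates, a vector of the plane spanned by the eigenvectors
   i and j that is orthogonal to w. *)
have [y [y_neq0 y_orth y_supp]] := exists_supp2_orthogonal (w *m P^T) ij.
have yP_neq0 : y *m P != 0.
  apply: contra_neq y_neq0 => yP0.
  have /unitarymxP PPt := spectral_unitarymx A.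
  by rewrite -[y]mulmx1 -PPt mulmxA yP0 mul0mx.
have := A_pos_on_hyperplane yP_neq0.
rewrite -mulmxA -[P *m w^T]trmxK trmx_mul trmxK y_orth => /(_ erefl).
rewrite {1}spectral_decomposition qform_unitary ?spectral_unitarymx // qform_diag.
suff le0 : \sum_k D 0 k * (y 0 k * (y 0 k)^*) <= 0.
  by move=> /lt_le_trans/(_ le0); rewrite ltxx.
apply: sumr_le0 => k _.
have [->|ki] := eqVneq k i; first by rewrite mulr_le0_ge0 ?mul_conjC_ge0.
have [->|kj] := eqVneq k j; first by rewrite mulr_le0_ge0 ?mul_conjC_ge0.
by rewrite y_supp // mul0r mulr0.
Qed.

Lemma spectral_diag_one_neg : (1 < N)%N -> \tr A = 0 ->
  exists i0, D 0 i0 < 0 /\ (forall i, i != i0 -> 0 < D 0 i).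
Proof.
move=> N_gt1 trA0.
have [i0 Di0 | no_neg] := pickP (fun i => D 0 i < 0).
  exists i0; split => // i ii0; rewrite real_ltNge ?real0 ?spectral_diag_real //.
  by apply/negP => Di; apply: (spectral_diag_le0_pair ii0 Di (ltW Di0)).
have D_ge0 i : 0 <= D 0 i.
  by rewrite real_leNgt ?real0 ?spectral_diag_real ?no_neg.
have D0 i : D 0 i = 0.
  apply: (psumr_eq0P (P := predT) (fun i _ => D_ge0 i)) => //.
  by rewrite -[RHS]trA0 mxtrace_spectral.
have N_gt0 : (0 < N)%N := ltnW N_gt1.
exfalso.
by apply: (spectral_diag_le0_pair (i := Ordinal N_gt0) (j := Ordinal N_gt1));
  rewrite ?D0.
Qed.
End SpectralSigns.

Section SeidelMinusEdge.
Variables (m n : nat) (e : {set 'I_(m + n)}).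

Definition ind_V1 : 'rV[int]_(m + n) := \row_k (in_V1 k)%:R.
Definition ind_V2 : 'rV[int]_(m + n) := \row_k (~~ in_V1 k)%:R.
Definition ind_e : 'rV[int]_(m + n) := \row_k (k \in e)%:R.
Definition coef_V1 : int := 1 - 2 * n%:R.
Definition coef_V2 : int := 1 - 2 * m%:R.
Definition coef_cross : int := 5 - 2 * (m + n)%:R.
Definition hyperplane_normal : 'rV[int]_(m + n) :=
  coef_V1 *: ind_V1 + coef_cross *: ind_V2.
(* The indicators are 0/1 and ind_V1, ind_V2 are disjoint, so this cancels the
   diagonal of the low-rank part. *)
Definition diag_correction : 'rV[int]_(m + n) :=
  - (coef_V1 *: ind_V1 + coef_V2 *: ind_V2 + 2 *: ind_e).

Lemma seidel_C3_setD1 : e \in C3 m n ->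
  seidel int (C3 m n :\ e) =
    coef_V1 *: (ind_V1^T *m ind_V1) + coef_V2 *: (ind_V2^T *m ind_V2)
    + coef_cross *: (ind_V1^T *m ind_V2 + ind_V2^T *m ind_V1)
    + 2 *: (ind_e^T *m ind_e) + diag_mx diag_correction.
Proof.
move=> eC3; apply/matrixP => k l.
rewrite !mxE !big_ord1 !mxE /diag_correction /coef_V1 /coef_V2 /coef_cross.
have [<-|kl] := eqVneq k l.
  by case: (in_V1 k); case: (k \in e) => /=; ring.
have := codeg_setD1 k l eC3; rewrite codeg_C3 //.
have := ltn_ord k; have := ltn_ord l.
case Hk: (in_V1 k); case Hl: (in_V1 l); case: (k \in e); case: (l \in e) => /=;
  move: Hk Hl; rewrite /in_V1; lia.
Qed.

Lemma coef_V1_lt0 : (1 <= n)%N -> coef_V1 < 0.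
Proof. by rewrite /coef_V1; lia. Qed.

Lemma coef_V1V2_le_sqr : (3 <= m)%N -> (3 <= n)%N ->
  coef_V1 * coef_V2 <= coef_cross ^+ 2.
Proof. by rewrite /coef_V1 /coef_V2 /coef_cross; nia. Qed.

Lemma diag_correction_gt0 k : (3 <= m)%N -> (3 <= n)%N -> 0 < diag_correction 0 k.
Proof.
rewrite /diag_correction /coef_V1 /coef_V2 !mxE.
by case: (in_V1 k); case: (k \in e) => /=; lia.
Qed.

Lemma qform_seidel_C3_setD1_gt0 (C : numClosedFieldType) :
  (3 <= m)%N -> (3 <= n)%N -> e \in C3 m n ->
  forall v : 'rV[C]_(m + n), v != 0 ->
  (v *m (map_mx intr hyperplane_normal)^T) 0 0 = 0 ->
  0 < qform (seidel C (C3 m n :\ e)) v.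
Proof.
move=> m_ge3 n_ge3 eC3 v v_neq0 v_orth.
have intr_realmx (F : 'rV[int]_(m + n)) : map_mx (intr : int -> C) F \is a realmx.
  by apply/mxOverP => k l; rewrite mxE realz.
rewrite -(map_seidel intr) seidel_C3_setD1 //.
rewrite !(map_mxD, map_mxZ, map_mxM, map_diag_mx) -!map_trmx.
apply: qform_gt0_on_hyperplane => //; rewrite ?realz ?intr_realmx //.
- by rewrite ltrz0 coef_V1_lt0 // (leq_trans _ n_ge3).
- by rewrite -rmorphM -rmorphXn ler_int coef_V1V2_le_sqr.
- by move=> k; rewrite mxE ltr0z diag_correction_gt0.
- by rewrite -v_orth !(map_mxD, map_mxZ).
Qed.
End SeidelMinusEdge.

Lemma char_poly_similar (R : comUnitRingType) n (P M : 'M[R]_n) :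
  P \in unitmx -> char_poly (invmx P *m M *m P) = char_poly M.
Proof.
move=> Pu; rewrite /char_poly /char_poly_mx.
set Q := map_mx polyC (invmx P); set Pp := map_mx polyC P.
have QP : Q *m Pp = 1%:M by rewrite -map_mxM mulVmx // map_mx1.
have -> : 'X%:M - map_mx polyC (invmx P *m M *m P)
          = Q *m ('X%:M - map_mx polyC M) *m Pp.
  rewrite !map_mxM mulmxBr mulmxBl -/Q -/Pp; congr (_ - _).
  by rewrite scalar_mxC -mulmxA QP mulmx1.
rewrite !det_mulmx mulrC mulrA -det_mulmx.
by rewrite [Pp *m Q]mulmx1C // det1 mul1r.
Qed.

Lemma char_poly_complexify (R : rcfType) N (A : 'M[R]_N) :
  map_mx (real_complex R) A \is hermsymmx ->
  let D := spectral_diag (map_mx (real_complex R) A) in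
  char_poly A = \prod_i ('X - (complex.Re (D 0 i))%:P).
Proof.
move=> herm D.
have ReD i : real_complex R (complex.Re (D 0 i)) = D 0 i.
  exact/RRe_real/spectral_diag_real.
apply: (map_poly_inj (real_complex R)); rewrite map_char_poly.
rewrite {1}(orthomx_spectralP (hermitian_normalmx herm)).
rewrite char_poly_similar ?spectral_unit //.
rewrite char_poly_trig ?diag_mx_is_trig // rmorph_prod; apply: eq_bigr => i _.
by rewrite rmorphB /= map_polyX map_polyC /= ReD !mxE eqxx mulr1n.
Qed.

Lemma Re_lt0 (R : rcfType) (x : R[i]) : x \is Num.real ->
  (complex.Re x < 0) = (x < 0).
Proof. by move=> /RRe_real xRe; rewrite -ltcR rmorph0 xRe. Qed.

Lemma Re_gt0 (R : rcfType) (x : R[i]) : x \is Num.real ->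
  (0 < complex.Re x) = (0 < x).
Proof. by move=> /RRe_real xRe; rewrite -ltcR rmorph0 xRe. Qed.

Theorem lemma2p10 (R : rcfType) (m n : nat) (e : {set 'I_(m + n)}) :
  (3 <= m)%N -> (3 <= n)%N -> e \in C3 m n ->
  exists lam : 'I_(m + n) -> R,
    char_poly (seidel R (C3 m n :\ e)) = \prod_(i < m + n) ('X - (lam i)%:P) /\
    exists i0 : 'I_(m + n), lam i0 < 0 /\ (forall i, i != i0 -> 0 < lam i).
Proof.
move=> m_ge3 n_ge3 eC3; set E := C3 m n :\ e.
have S_herm := seidel_hermsym R[i] E.
have N_gt1 : (1 < m + n)%N.
  by apply: leq_trans (leq_addr _ _); apply: leq_trans m_ge3.
have [i0 [neg_i0 pos_others]] := spectral_diag_one_neg S_herm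
  (qform_seidel_C3_setD1_gt0 m_ge3 n_ge3 eC3) N_gt1 (mxtrace_seidel _ _).
exists (fun k => complex.Re (spectral_diag (seidel R[i] E) 0 k)); split.
  by rewrite char_poly_complexify map_seidel.
exists i0; split; first by rewrite Re_lt0 ?spectral_diag_real.
by move=> k /pos_others; rewrite Re_gt0 ?spectral_diag_real.
Qed.
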